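(* Consider an $\mathbb{H}_{2n+1}$-structure on $\mathbb{P}V$ such that $T$ fixes every point of the boundary hyperplane $\mathbb{P}V'$, with associated algebra $\mathcal{A}$, Lie algebra $\mathfrak{h}_{2n+1}=\mathfrak{w}\oplus\mathbb{C}t$, maps $\theta$ and $ev$ as in the context. Then $\theta(t)=0$, $\theta$ is injective on $\mathfrak{w}$, $\theta(\mathfrak{w})$ generates $\mathfrak{m}_{\mathcal{B}}=\theta(\mathfrak{m})$ as an associative algebra, and $\theta(\ker(ev))=0$.
   Context: Work over $\mathbb{C}$, $n\ge1$. The Heisenberg group $\mathbb{H}_{2n+1}$ is $\mathbb{W}\times\mathbb{C}$ ($\mathbb{W}$ a $2n$-dimensional space with non-degenerate skew form $\omega$) with law $(w_1,t_1)(w_2,t_2)=(w_1+w_2,t_1+t_2+\tfrac12\omega(w_1,w_2))$; $T=(0,1)$, $\mathbb{I}=\mathbb{C}T$ its center. $V\cong\mathbb{C}^{2n+2}$. An $\mathbb{H}_{2n+1}$-structure on $\mathbb{P}V$ is an effective algebraic action with dense open orbit, with boundary a hyperplane $\mathbb{P}V'$. Regard $\mathbb{H}_{2n+1}\subset\mathbb{P}\mathrm{GL}_{2n+2}(\mathbb{C})$; choosing a basis, it lies in the image of the group of unipotent upper-triangular matrices, and its Lie algebra is realized as a Lie subalgebra $\mathfrak{h}_{2n+1}$ of strictly upper-triangular matrices (commutator bracket), written $\mathfrak{h}_{2n+1}=\mathfrak{w}\oplus\mathbb{C}t$ with $\mathbb{C}t$ the center (the tangent line of $\mathbb{I}$)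 and $[\mathfrak{w},\mathfrak{w}]=\mathbb{C}t$. With $\pi:\mathrm{GL}_{2n+2}\to\mathbb{P}\mathrm{GL}_{2n+2}$ the projection, $\mathcal{A}$ is the unital associative subalgebra of $\mathrm{Mat}_{2n+2}(\mathbb{C})$ generated by $\pi^{-1}(\mathbb{H}_{2n+1})$; $\mathcal{A}=\mathbb{C}I\oplus\mathfrak{m}$ where $\mathfrak{m}$ is the associative subalgebra generated by $\mathfrak{h}_{2n+1}$. Fix $o$ in the open orbit with representative $\hat o\in V$, and let $ev:\mathcal{A}\to V$, $a\mapsto a\hat o$. Let $v=\overline{\mathbb{I}\cdot o}\setminus\mathbb{I}\cdot o$, $\hat v$ a representative, $\widetilde V=V/\mathbb{C}\hat v$. The point $v$ is fixed by $\mathbb{H}_{2n+1}$, so every element of $\mathcal{A}$ preserves $\mathbb{C}\hat v$; let $\theta:\mathcal{A}\to\mathrm{End}(\widetilde V)$ send $a$ to the induced endomorphism of $\widetilde V$, $\mathcal{B}=\theta(\mathcal{A})$ and $\mathfrak{m}_{\mathcal{B}}=\theta(\mathfrak{m})$. *)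

From HB Require Import structures.
From mathcomp Require Import all_boot all_order all_algebra.
From mathcomp Require Import reals complex.
From mathcomp Require Import mpoly.
Set Implicit Arguments. Unset Strict Implicit. Unset Printing Implicit Defensive.
Import Order.TTheory GRing.Theory Num.Theory.
Local Open Scope ring_scope.

Section Heis.
Variables (K : fieldType) (n : nat).

Definition Hgrp := ('rV[K]_(n.*2) * K)%type.

Definition omega (Om : 'M[K]_(n.*2)) (a b : 'rV[K]_(n.*2)) : K :=
  (a *m Om *m b^T) 0 0.

Definition hmul (Om : 'M[K]_(n.*2)) (g h : Hgrp) : Hgrp :=
  (g.1 + h.1, g.2 + h.2 + 2^-1 * omega Om g.1 h.1).

Definition hunit : Hgrp := (0, 0).
Definition hT : Hgrp := (0, 1).

(* coordinates (w_0, ..., w_{2n-1}, t) of a group element *)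
Definition coords (g : Hgrp) : 'I_(n.*2.+1) -> K :=
  fun i => if unlift ord_max i is Some j then g.1 0 j else g.2.

(* the differential at the identity of the polynomial map given by P:
   dρ(X) = sum_k X_k (∂_k P)(0), where X = (w,t) is a tangent vector of
   H at the identity (the Lie algebra of H, identified with W + K). *)
Definition drho N (P : 'I_N -> 'I_N -> {mpoly K[n.*2.+1]}) (X : Hgrp)
  : 'M[K]_N :=
  \matrix_(i, j) \sum_(k < n.*2.+1)
     coords X k * (mderiv k (P i j)).@[fun _ => 0].

End Heis.

Section Gen.
Variables (K : fieldType) (N : nat).

Inductive alg_gen (u : bool) (S : 'M[K]_N -> Prop) : 'M[K]_N -> Prop :=
| ag_in a : S a -> alg_gen u S a
| ag_unit : u -> alg_gen u S 1%:M
| ag_zero : alg_gen u S 0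
| ag_add a b : alg_gen u S a -> alg_gen u S b -> alg_gen u S (a + b)
| ag_scale (c : K) a : alg_gen u S a -> alg_gen u S (c *: a)
| ag_mul a b : alg_gen u S a -> alg_gen u S b -> alg_gen u S (a *m b).

(* Zariski closure in P(K^N): [x] lies in the closure of the cone S iff every
   homogeneous polynomial vanishing on S vanishes at x. *)
Definition in_Pclosure (S : 'cV[K]_N -> Prop) (x : 'cV[K]_N) : Prop :=
  forall (d : nat) (p : {mpoly K[N]}), p \is d.-homog ->
    (forall y, S y -> p.@[fun i => y i 0] = 0) -> p.@[fun i => x i 0] = 0.

(* theta a = theta b in End(V / K vh), for a, b preserving K vh:
   (a - b) maps V into K vh *)
Definition qeq (vh : 'cV[K]_N) (a b : 'M[K]_N) : Prop :=
  forall x : 'cV[K]_N, exists c : K, (a - b) *m x = c *: vh.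

End Gen.

(* orbit of [oh] (as a cone in V) under the action g.[x] = [rho g x] *)
Definition Hstr_orbit (K : fieldType) n N (rho : Hgrp K n -> 'M[K]_N)
  (oh x : 'cV[K]_N) : Prop :=
  exists g c, c != 0 /\ x = c *: (rho g *m oh).

Definition center_orbit (K : fieldType) n N (rho : Hgrp K n -> 'M[K]_N)
  (oh x : 'cV[K]_N) : Prop :=
  exists (s : K) c, c != 0 /\ x = c *: (rho (0, s) *m oh).

From Pilot Require Import Defs.
From HB Require Import structures.
From mathcomp Require Import all_boot all_order all_algebra.
From mathcomp Require Import reals complex.
From mathcomp Require Import mpoly.
From mathcomp Require Import ring zify.
Set Implicit Arguments. Unset Strict Implicit. Unset Printing Implicit Defensive.
Import Order.TTheory GRing.Theory Num.Theory.
Local Open Scope ring_scope.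

(* Restricted to a line [s |-> s g], the polynomial representation [rho] is a
   polynomial one-parameter group, hence [rho (s g) = exp (s drho g)] with
   [drho g] nilpotent; this lets us differentiate identities between the
   [rho g] at [s = 0]. The boundary form [phi] is [rho]-invariant, and since
   [T] is unipotent and acts by scalars on [ker phi], [drho t] kills [ker phi]:
   [drho t = m phi] has rank one and [rho (0, s) = 1 + s drho t]. So the
   closure of the orbit of [o] under the centre lies on the line through [o]
   and [[m]], and [v = [m]].
   Commutators in the group are central, so every element of the algebra
   generated by the [rho g] preserves [C v] and commutes with each [rho g]
   modulo maps [V -> C v]; as the orbit of [o] is open, an element killing
   [o] is such a map. Expanding [rho g ^+ k] both as [exp (k drho g)] and
   binomially as [(1 + b) ^+ k] modulo such maps, the coefficients of [k]
   show that [ker phi] is spanned by [drho (h) o] and [v]; counting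
   dimensions, the vectors [drho (w_i) o] and [v] are independent, which is
   the injectivity of [theta] on [w]. *)

Section PolyNat.
Variable K : numFieldType.

Lemma poly_nat_eq0 (p : {poly K}) : (forall k : nat, p.[k%:R] = 0) -> p = 0.
Proof.
move=> p_nat0; apply/eqP/negPn/negP => p_neq0.
set rs := [seq i%:R | i <- iota 0 (size p)] : seq K.
have rs_roots : all (root p) rs by apply/allP => x /mapP [i _ ->]; apply/rootP.
have rs_uniq : uniq rs.
  by rewrite map_inj_uniq ?iota_uniq // => i j /eqP; rewrite eqr_nat => /eqP.
by have := max_poly_roots p_neq0 rs_roots rs_uniq; rewrite size_map size_iota ltnn.
Qed.

Lemma poly_nat_inj (p q : {poly K}) :
  (forall k : nat, p.[k%:R] = q.[k%:R]) -> p = q.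
Proof.
move=> pq_nat; apply/eqP; rewrite -subr_eq0; apply/eqP/poly_nat_eq0 => k.
by rewrite hornerD hornerN pq_nat subrr.
Qed.

Lemma sum_nat_powers_eq0 (J : nat) (e : nat -> K) :
  (forall k : nat, \sum_(j < J) e j * k%:R ^+ j = 0) ->
  forall j, (j < J)%N -> e j = 0.
Proof.
move=> sum0 j ltjJ.
have p0 : \poly_(i < J) e i = 0 by apply: poly_nat_eq0 => k; rewrite horner_poly sum0.
by have := congr1 (fun q : {poly K} => q`_j) p0; rewrite coef_poly ltjJ coef0.
Qed.

Lemma sum_nat_powers_mx_eq0 a b (J : nat) (e : nat -> 'M[K]_(a, b)) :
  (forall k : nat, \sum_(j < J) k%:R ^+ j *: e j = 0) ->
  forall j, (j < J)%N -> e j = 0.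
Proof.
move=> sum0 j ltjJ; apply/matrixP => r c; rewrite mxE.
apply: (@sum_nat_powers_eq0 J (fun j => e j r c)) => // k.
have := congr1 (fun A : 'M[K]_(a, b) => A r c) (sum0 k).
rewrite /= summxE mxE => E; rewrite -[RHS]E; apply: eq_bigr => i _; by rewrite mxE mulrC.
Qed.

End PolyNat.

Lemma big_ord_trunc (V : zmodType) (m1 m2 : nat) (F : nat -> V) :
  (forall j, (m1 <= j)%N -> F j = 0) -> (m1 <= m2)%N ->
  \sum_(j < m2) F j = \sum_(j < m1) F j.
Proof.
move=> F0 le12; rewrite [RHS](big_ord_widen m2 F le12) [RHS]big_mkcond /=.
by apply: eq_bigr => j _; case: ifP => // /negbT; rewrite -leqNgt => /F0 ->.
Qed.

Section BinomialPoly.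
Variable K : numFieldType.

Definition binpoly (j : nat) : {poly K} :=
  (j`!%:R)^-1 *: \prod_(i < j) ('X - (i%:R)%:P).

Lemma binpoly_nat j k : (binpoly j).[k%:R] = 'C(k, j)%:R.
Proof.
rewrite /binpoly hornerZ horner_prod.
under eq_bigr do rewrite hornerXsubC.
have -> : \prod_(i < j) ((k%:R : K) - i%:R) = (k ^_ j)%:R.
  elim: j => [|j IH]; first by rewrite big_ord0 ffactn0.
  rewrite big_ord_recr /= IH ffactnSr natrM.
  by case: (leqP j k) => [lejk|ltkj]; [rewrite natrB | rewrite ffact_small // !mul0r].
have fact_neq0 : (j`!%:R : K) != 0 by rewrite pnatr_eq0 -lt0n fact_gt0.
by rewrite -bin_ffact natrM mulrC mulfK.
Qed.

Lemma binpoly1_coef1 : (binpoly 1)`_1 = 1.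
Proof.
rewrite /binpoly big_ord1 coefZ coefB coefX coefC /= subr0 mulr1.
by rewrite (_ : 1`!%:R = 1 :> K) // invr1.
Qed.

End BinomialPoly.

Lemma eq_mx_on_cV (K : fieldType) m N (A B : 'M[K]_(m, N)) :
  (forall x : 'cV[K]_N, A *m x = B *m x) -> A = B.
Proof.
move=> AB; apply/matrixP => i j; have := AB (delta_mx j 0); rewrite -!colE.
by move/(congr1 (fun C : 'M[K]_(m, 1) => C i 0)); rewrite !mxE.
Qed.

Lemma nilpotent_eigenvalue0 (K : fieldType) N (A : 'M[K]_N.+1) (u : 'rV[K]_N.+1) lam J :
  A ^+ J = 0 -> u != 0 -> u *m A = lam *: u -> lam = 0.
Proof.
move=> AJ0 u_neq0 uA.
have uAk k : u *m A ^+ k = lam ^+ k *: u.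
  elim: k => [|k IH]; first by rewrite !expr0 mulmx1 scale1r.
  by rewrite exprSr -mulmxE mulmxA IH -scalemxAl uA scalerA exprSr.
move: (uAk J); rewrite AJ0 mulmx0 => /esym/eqP.
by rewrite scaler_eq0 (negbTE u_neq0) orbF expf_eq0 => /andP [_ /eqP].
Qed.

Section MatrixExp.
Variables (K : numFieldType) (N : nat).
Implicit Types (A D : 'M[K]_N.+1) (s c : K).

Definition expmx D (J : nat) s : 'M[K]_N.+1 :=
  \sum_(j < J) s ^+ j *: ((j`!%:R)^-1 *: D ^+ j).

Lemma mulmx_expmx a b (A : 'M[K]_(a, N.+1)) (B : 'M[K]_(N.+1, b)) D J s :
  A *m expmx D J s *m B =
  \sum_(j < J) s ^+ j *: ((j`!%:R)^-1 *: (A *m D ^+ j *m B)).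
Proof.
rewrite /expmx mulmx_sumr mulmx_suml; apply: eq_bigr => j _.
by rewrite -!scalemxAr -!scalemxAl.
Qed.

Lemma expmx_sqr0 D J s : D *m D = 0 -> expmx D J.+2 s = 1%:M + s *: D.
Proof.
move=> DD0; rewrite /expmx 2!big_ord_recl big1 ?addr0 => [|j _].
  by rewrite /= !expr0 !expr1 fact0 invr1 !scale1r.
rewrite (_ : (lift ord0 (lift ord0 j) : nat) = j.+2) //.
have -> : D ^+ j.+2 = D ^+ j *m (D *m D) by rewrite !exprSr !mulmxE mulrA.
by rewrite DD0 mulmx0 !scaler0.
Qed.

Lemma mulmx_expmx_ker (u : 'rV[K]_N.+1) D J s :
  u *m D = 0 -> u *m expmx D J.+1 s = u.
Proof.
move=> uD0; rewrite -[u *m _]mulmx1 mulmx_expmx big_ord_recl big1 ?addr0 => [|j _].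
  by rewrite !expr0 fact0 invr1 !scale1r !mulmx1.
rewrite (_ : (lift ord0 j : nat) = j.+1) //.
have -> : D ^+ j.+1 = D *m D ^+ j by rewrite exprS mulmxE.
by rewrite mulmxA uD0 !mul0mx !scaler0.
Qed.

Lemma expmx1_sub1_nilpotent D J :
  D ^+ J = 0 -> (expmx D J.+1 1 - 1%:M) ^+ J = 0.
Proof.
move=> DJ0; set U := \sum_(j < J) ((j.+1)`!%:R)^-1 *: D ^+ j.
have -> : expmx D J.+1 1 - 1%:M = D * U.
  rewrite /expmx big_ord_recl !expr0 fact0 invr1 !scale1r addrAC subrr add0r.
  rewrite mulr_sumr; apply: eq_bigr => j _.
  by rewrite expr1n scale1r -scalerAr -exprS.
have DU : GRing.comm D U.
  rewrite /GRing.comm mulr_sumr mulr_suml; apply: eq_bigr => j _.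
  by rewrite -scalerAr -scalerAl -exprS exprSr.
by rewrite exprMn_comm // DJ0 mul0r.
Qed.

(* The two lowest-order terms of [D^k (expmx D) x = c D^k x], taken at the
   largest k with [D^k x <> 0], force [D^k x = 0]. *)
Lemma expmx_eigenvector D J (x : 'cV[K]_N.+1) c :
  D ^+ J.+2 = 0 -> expmx D J.+2 1 *m x = c *: x -> D *m x = 0.
Proof.
move=> DJ0 Ex.
pose y k := D ^+ k *m x.
have y_large k : (J.+2 <= k)%N -> y k = 0.
  by move=> leJk; rewrite /y -(subnK leJk) exprD DJ0 mulr0 mul0mx.
have Ey k : \sum_(j < J.+2) (j`!%:R)^-1 *: y (j + k)%N = c *: y k.
  have := congr1 (mulmx (D ^+ k)) Ex; rewrite mulmxA mulmx_expmx scalemxAr => <-.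
  apply: eq_bigr => j _; rewrite expr1n scale1r /y.
  by rewrite mulmxE -exprD addnC.
have y_desc d k : (0 < k)%N -> (J.+2 <= k + d)%N -> y k = 0.
  elim: d k => [|d IH] k k_gt0 lekd; first by apply: y_large; rewrite addn0 in lekd.
  have y_above k' : (k < k')%N -> y k' = 0.
    move=> ltkk'; apply: IH; first exact: leq_trans k_gt0 (ltnW ltkk').
    by apply: leq_trans lekd _; rewrite addnS -addSn leq_add2r.
  have Ek := Ey k; rewrite 2!big_ord_recl big1 /= in Ek; last first.
    by move=> j _; rewrite y_above ?scaler0 // /bump /=; lia.
  rewrite /bump /= add0n add1n (y_above k.+1 (ltnSn k)) scaler0 !addr0 in Ek.
  rewrite fact0 invr1 scale1r in Ek.
  have Ek1 := Ey k.-1; rewrite 2!big_ord_recl big1 /= in Ek1; last first.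
    by move=> j _; rewrite y_above ?scaler0 // /bump /=; lia.
  rewrite /bump /= add0n addn0 add1n prednK // fact0 invr1 !scale1r addr0 in Ek1.
  have [c1|cn1] := eqVneq c 1.
    by move: Ek1; rewrite c1 scale1r -{2}[y k.-1]addr0 => /addrI.
  have : (1 - c) *: y k = 0 by rewrite scalerBl scale1r -{1}Ek subrr.
  by move/eqP; rewrite scaler_eq0 subr_eq0 eq_sym (negbTE cn1) => /eqP.
by have := y_desc J.+2 1%N isT; rewrite add1n /y expr1 => ->.
Qed.

End MatrixExp.

Section PolyMxHom.
Variables (K : numFieldType) (N : nat).
Implicit Types (p : 'I_N.+1 -> 'I_N.+1 -> {poly K}).

Definition polymx p (s : K) : 'M[K]_N.+1 := \matrix_(i, l) (p i l).[s].
Definition coefmx p (a : nat) : 'M[K]_N.+1 := \matrix_(i, l) (p i l)`_a.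

Variable p : 'I_N.+1 -> 'I_N.+1 -> {poly K}.
Hypothesis polymxD : forall s s', polymx p s *m polymx p s' = polymx p (s + s').
Hypothesis polymx0 : polymx p 0 = 1%:M.

Lemma horner_deriv_polymx s i l :
  \sum_r (p i r).[s] * (p r l)`_1 = (p i l)^`().[s].
Proof.
have shift : \sum_r (p i r).[s] *: p r l = p i l \Po ('X + s%:P).
  apply: poly_nat_inj => k; rewrite horner_comp !hornerE addrC.
  have := congr1 (fun A : 'M[K]_N.+1 => A i l) (polymxD s k%:R).
  rewrite /= !mxE => <-; rewrite horner_sum; apply: eq_bigr => r _.
  by rewrite hornerZ !mxE.
have coef1E (q : {poly K}) : q`_1 = q^`().[0].
  by rewrite horner_coef0 coef_deriv mulr1n.
have := congr1 (fun q : {poly K} => q`_1) shift; rewrite coef_sum.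
under eq_bigr do rewrite coefZ.
move=> ->; rewrite coef1E deriv_comp derivD derivX derivC addr0 mulr1 horner_comp.
by rewrite !hornerE.
Qed.

Lemma coefmxS a : coefmx p a *m coefmx p 1 = a.+1%:R *: coefmx p a.+1.
Proof.
apply/matrixP => i l; rewrite !mxE.
have deriv_sum : \sum_r (p r l)`_1 *: p i r = (p i l)^`().
  apply: poly_nat_inj => k; rewrite -horner_deriv_polymx horner_sum.
  by apply: eq_bigr => r _; rewrite hornerZ mulrC.
have := congr1 (fun q : {poly K} => q`_a) deriv_sum.
rewrite coef_sum coef_deriv mulr_natl => <-.
by apply: eq_bigr => r _; rewrite coefZ !mxE mulrC.
Qed.

Lemma coefmx0 : coefmx p 0 = 1%:M.
Proof. by rewrite -polymx0; apply/matrixP => i l; rewrite !mxE horner_coef0. Qed.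

Lemma coefmxE a : coefmx p a = (a`!%:R)^-1 *: coefmx p 1 ^+ a.
Proof.
elim: a => [|a IH]; first by rewrite coefmx0 fact0 invr1 scale1r expr0.
have a1_neq0 : (a.+1%:R : K) != 0 by rewrite pnatr_eq0.
have -> : coefmx p a.+1 = (a.+1%:R)^-1 *: (coefmx p a *m coefmx p 1).
  by rewrite coefmxS scalerA mulVf // scale1r.
by rewrite IH -scalemxAl scalerA factS natrM invfM exprSr mulmxE.
Qed.

Variable J : nat.
Hypothesis size_p : forall i l, (size (p i l) <= J)%N.

Lemma coefmx1_nilpotent : coefmx p 1 ^+ J = 0.
Proof.
have coefJ0 : coefmx p J = 0 by apply/matrixP => i l; rewrite !mxE nth_default.
move: (coefmxE J); rewrite coefJ0 => /esym/eqP; rewrite scaler_eq0 invr_eq0.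
by rewrite pnatr_eq0 (negbTE (lt0n_neq0 (fact_gt0 J))) => /eqP.
Qed.

Lemma polymx_expmx s : polymx p s = expmx (coefmx p 1) J s.
Proof.
apply/matrixP => i l; rewrite !mxE summxE (horner_coef_wide _ (size_p i l)).
by apply: eq_bigr => j _; rewrite -coefmxE !mxE mulrC.
Qed.

End PolyMxHom.

Section MpolyLine.
Variables (K : numFieldType) (M : nat).
Implicit Types (Q : {mpoly K[M]}) (c : 'I_M -> K).

Definition mpoly_line Q c : {poly K} :=
  \sum_(m <- msupp Q) (Q@_m * \prod_k c k ^+ m k) *: 'X^(mdeg m).

Lemma horner_mpoly_line Q c s : (mpoly_line Q c).[s] = Q.@[fun k => s * c k].
Proof.
rewrite mevalE /mpoly_line horner_sum; apply: eq_bigr => m _.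
rewrite hornerZ hornerXn -mulrA; congr (_ * _).
under [RHS]eq_bigr do rewrite exprMn.
by rewrite big_split /= prodrXr -mdegE mulrC.
Qed.

Lemma mcoeff_msupp_sum Q (m' : 'X_{1..M}) :
  Q@_m' = \sum_(m <- msupp Q) Q@_m * (m == m')%:R.
Proof.
rewrite {1}(mpolyE Q) raddf_sum /=; apply: eq_bigr => m _.
by rewrite mcoeffZ mcoeffX.
Qed.

Lemma prod_expr0n (m : 'X_{1..M}) : \prod_(i < M) (0 : K) ^+ m i = (m == 0%MM)%:R.
Proof.
have [->|m_neq0] := eqVneq m 0%MM.
  by rewrite big1 // => i _; rewrite mnm0E expr0.
have [i mi_neq0] : exists i, m i != 0%N.
  apply/existsP; apply: contraR m_neq0; rewrite negb_exists => /forallP m0.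
  by apply/eqP/mnmP => i; rewrite mnm0E; have := m0 i; rewrite negbK => /eqP.
by rewrite (bigD1 i) //= expr0n (negbTE mi_neq0) mul0r.
Qed.

Lemma meval0_mcoeff Q : Q.@[fun _ => 0] = Q@_0%MM.
Proof.
by rewrite mevalE mcoeff_msupp_sum; apply: eq_bigr => m _; rewrite prod_expr0n.
Qed.

Lemma coef1_mpoly_line Q c :
  (mpoly_line Q c)`_1 = \sum_k c k * (mderiv k Q).@[fun _ => 0].
Proof.
under [RHS]eq_bigr do rewrite meval0_mcoeff mcoeff_deriv mnm0E mulr1n add0m
   mcoeff_msupp_sum big_distrr.
rewrite /= exchange_big /mpoly_line coef_sum; apply: eq_bigr => m _.
rewrite coefZ coefXn.
have [[i /eqP ->]|not_deg1] := mdeg1P m; last first.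
  rewrite (_ : (1%N == mdeg m) = false) ?mulr0; last first.
    by rewrite eq_sym; apply/negbTE/(introN (mdeg1P m)).
  rewrite big1 // => k _; case: eqP => [mk|]; last by rewrite !mulr0.
  by case: not_deg1; exists k; rewrite mk.
have -> : \prod_k c k ^+ U_(i)%MM k = c i.
  rewrite (bigD1 i) //= mnm1E eqxx expr1 big1 ?mulr1 // => j nji.
  by rewrite mnm1E eq_sym (negbTE nji) expr0.
rewrite (bigD1 i) //= eq_mnm1 eqxx mulr1 big1 ?addr0 => [|j nji].
  by rewrite mdeg1 eqxx mulr1 mulrC.
by rewrite eq_mnm1 eq_sym (negbTE nji) !mulr0.
Qed.

End MpolyLine.

Section MatrixForms.
Variables (K : numFieldType) (N : nat).
Implicit Types (lam : 'cV[K]_(N * N)) (Y : 'M[K]_N).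

Definition mxform lam Y : K := (mxvec Y *m lam) 0 0.

Lemma mxformD lam Y1 Y2 : mxform lam (Y1 + Y2) = mxform lam Y1 + mxform lam Y2.
Proof. by rewrite /mxform linearD mulmxDl mxE. Qed.

Lemma mxformZ lam c Y : mxform lam (c *: Y) = c * mxform lam Y.
Proof. by rewrite /mxform linearZ -scalemxAl mxE. Qed.

Lemma mxformB lam Y1 Y2 : mxform lam (Y1 - Y2) = mxform lam Y1 - mxform lam Y2.
Proof. by rewrite mxformD -scaleN1r mxformZ mulN1r. Qed.

Lemma mxform0 lam : mxform lam 0 = 0.
Proof. by rewrite /mxform linear0 mul0mx mxE. Qed.

Lemma mxform_sum lam (I : Type) (r : seq I) (F : I -> 'M[K]_N) :
  mxform lam (\sum_(i <- r) F i) = \sum_(i <- r) mxform lam (F i).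
Proof. by rewrite /mxform linear_sum mulmx_suml summxE. Qed.

End MatrixForms.

Lemma mxform_binomial (K : numFieldType) N lam (b : 'M[K]_N.+1) J (e : K) k :
  b ^+ J = 0 ->
  mxform lam ((1%:M + e *: b) ^+ k) =
  (\sum_(i < J) (e ^+ i * mxform lam (b ^+ i)) *: binpoly K i).[k%:R].
Proof.
move=> bJ0; pose F i := 'C(k, i)%:R * (e ^+ i * mxform lam (b ^+ i)).
rewrite addrC exprD1n mxform_sum horner_sum.
transitivity (\sum_(i < k.+1) F i).
  by apply: eq_bigr => i _; rewrite -scaler_nat exprZn !mxformZ.
transitivity (\sum_(i < J) F i); last first.
  by apply: eq_bigr => i _; rewrite hornerZ binpoly_nat mulrC.
have F_small i : (k.+1 <= i)%N -> F i = 0.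
  by move=> ltki; rewrite /F bin_small // mul0r.
have F_large i : (J <= i)%N -> F i = 0.
  by move=> leJi; rewrite /F -(subnK leJi) [b ^+ _]exprD bJ0 mulr0 mxform0 !mulr0.
rewrite -(big_ord_trunc F_small (leq_addr J k.+1)).
by rewrite (big_ord_trunc F_large (leq_addl k.+1 J)).
Qed.

Lemma alg_gen_sub (K : fieldType) N u (S T : 'M[K]_N -> Prop) a :
  (forall b, S b -> T b) -> alg_gen u S a -> alg_gen u T a.
Proof.
move=> ST; elim => {a} [a /ST|||a b _ ha _ hb|c a _ ha|a b _ ha _ hb].
- exact: ag_in.
- exact: ag_unit.
- exact: ag_zero.
- exact: ag_add.
- exact: ag_scale.
- exact: ag_mul.
Qed.

Lemma in_Pclosure_submx (K : fieldType) N k (B : 'M[K]_(k, N))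
    (S : 'cV[K]_N -> Prop) (x : 'cV[K]_N) :
  (forall y, S y -> (y^T <= B)%MS) -> in_Pclosure S x -> (x^T <= B)%MS.
Proof.
move=> SB clSx; rewrite submxE; apply/eqP/matrixP => i c; rewrite (ord1 i) [RHS]mxE.
set C := cokermx B.
pose p : {mpoly K[N]} := \sum_j C j c *: 'X_j.
have p_homog : p \is 1.-homog.
  apply: rpred_sum => j _; apply: rpredZ.
  by rewrite dhomogX; apply/mdeg1P; exists j.
have p_eval (y : 'cV[K]_N) : p.@[fun i => y i 0] = (y^T *m C) 0 c.
  rewrite /p raddf_sum mxE /=; apply: eq_bigr => j _.
  by rewrite mevalZ mevalXU mulrC [y^T 0 j]mxE.
rewrite -p_eval; apply: (clSx _ _ p_homog) => y /SB /submxP [r yB].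
by rewrite p_eval yB -mulmxA mulmx_coker mulmx0 mxE.
Qed.

Section HeisenbergGroup.
Variables (K : numFieldType) (n : nat) (Om : 'M[K]_(n.*2)).
Local Notation H := (Hgrp K n).
Local Notation omega := (omega Om).
Local Notation hmul := (hmul Om).

Definition hscale (s : K) (g : H) : H := (s *: g.1, s * g.2).
Definition hinv (g : H) : H := (- g.1, - g.2).

Lemma omegaZl s a b : omega (s *: a) b = s * omega a b.
Proof. by rewrite /Defs.omega -!scalemxAl mxE. Qed.

Lemma omegaZr s a b : omega a (s *: b) = s * omega a b.
Proof. by rewrite /Defs.omega linearZ /= -scalemxAr mxE. Qed.

Lemma omegaNl a b : omega (- a) b = - omega a b.
Proof. by rewrite -scaleN1r omegaZl mulN1r. Qed.

Lemma omega0l b : omega 0 b = 0.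
Proof. by rewrite /Defs.omega !mul0mx mxE. Qed.

Lemma omega0r a : omega a 0 = 0.
Proof. by rewrite /Defs.omega trmx0 mulmx0 mxE. Qed.

Lemma hmul_center g s : hmul g (0, s) = hmul (0, s) g.
Proof.
rewrite /hmul /=; congr (_, _); first by rewrite addr0 add0r.
by rewrite omega0r omega0l !mulr0 !addr0 addrC.
Qed.

Lemma hmul_commutator h g :
  hmul h g = hmul (hmul g h) (0, 2^-1 * omega h.1 g.1 - 2^-1 * omega g.1 h.1).
Proof.
rewrite /hmul /=; congr (_, _); first by rewrite addr0 addrC.
rewrite omega0r mulr0 addr0; set a := omega h.1 g.1; set b := omega g.1 h.1.
ring.
Qed.

Hypothesis Om_skew : Om^T = - Om.

Lemma omega_alternating w : omega w w = 0.
Proof.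
have omega_opp : omega w w = - omega w w.
  have tr11 (A : 'M[K]_1) : A 0 0 = A^T 0 0 by rewrite mxE.
  rewrite /Defs.omega {1}tr11 !trmx_mul trmxK Om_skew mulmxA mulmxN mulNmx.
  by rewrite !mxE.
have : 2%:R * omega w w = 0 by rewrite mulr2n mulrDl mul1r {1}omega_opp addNr.
by move/eqP; rewrite mulf_eq0 pnatr_eq0 /= => /eqP.
Qed.

Lemma hmul_hscale s s' g : hmul (hscale s g) (hscale s' g) = hscale (s + s') g.
Proof.
rewrite /hmul /hscale /=; congr (_, _); first by rewrite scalerDl.
by rewrite omegaZl omegaZr omega_alternating !mulr0 addr0 mulrDl.
Qed.

Lemma hmul_hinv g : hmul (hinv g) g = hunit K n.
Proof.
rewrite /hmul /hinv /hunit /=; congr (_, _); first by rewrite addNr.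
by rewrite omegaNl omega_alternating oppr0 mulr0 addr0 addNr.
Qed.

End HeisenbergGroup.

Section Coordinates.
Variables (K : numFieldType) (n : nat).
Implicit Types g : Hgrp K n.

Lemma hscale0 g : hscale 0 g = hunit K n.
Proof. by rewrite /hscale scale0r mul0r. Qed.

Lemma hscale1 g : hscale 1 g = g.
Proof. by case: g => a b; rewrite /hscale scale1r mul1r. Qed.

Lemma hscale_hT s : hscale s (hT K n) = (0, s).
Proof. by rewrite /hscale /hT /= scaler0 mulr1. Qed.

Lemma coords_hscale s g k : coords (hscale s g) k = s * coords g k.
Proof. by rewrite /coords; case: unlift => [j|] /=; rewrite ?mxE. Qed.

Lemma coords_split g k : coords g k = coords (g.1, 0) k + g.2 * coords (hT K n) k.
Proof.
rewrite /coords /hT; case: unlift => [j|] /=; first by rewrite mxE mulr0 addr0.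
by rewrite mulr1 add0r.
Qed.

Definition hgrp_of_coords (r : 'rV[K]_(n.*2.+1)) : Hgrp K n :=
  (\row_j r 0 (lift ord_max j), r 0 ord_max).

Lemma coords_hgrp_of_coords r k : coords (hgrp_of_coords r) k = r 0 k.
Proof. by rewrite /coords; case: (unliftP ord_max k) => [j ->|->] /=; rewrite ?mxE. Qed.

End Coordinates.

Section Representation.
Variables (K : numFieldType) (n : nat) (Om : 'M[K]_(n.*2)).
Local Notation N := n.*2.+2.
Variables (rho : Hgrp K n -> 'M[K]_N) (P : 'I_N -> 'I_N -> {mpoly K[n.*2.+1]}).
Hypothesis Om_skew : Om^T = - Om.
Hypothesis rho_unit : rho (hunit K n) = 1%:M.
Hypothesis rhoM : forall g h, rho (hmul Om g h) = rho g *m rho h.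
Hypothesis rhoE : forall g i j, rho g i j = (P i j).@[coords g].
Local Notation D := (@drho K n N P).

Definition drho_basis (k : 'I_(n.*2.+1)) : 'M[K]_N :=
  \matrix_(i, l) (mderiv k (P i l)).@[fun _ => 0].

Lemma drhoE g : D g = \sum_k coords g k *: drho_basis k.
Proof.
by apply/matrixP => i l; rewrite !mxE summxE; apply: eq_bigr => k _; rewrite !mxE.
Qed.

Lemma drho_split g : D g = D (g.1, 0) + g.2 *: D (hT K n).
Proof.
rewrite !drhoE scaler_sumr -big_split /=; apply: eq_bigr => k _.
by rewrite coords_split scalerDl scalerA.
Qed.

Lemma drho0 : D (0, 0) = 0.
Proof.
rewrite drhoE big1 // => k _.
by rewrite /coords; case: unlift => [j|] /=; rewrite ?mxE scale0r.
Qed.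

Lemma drho_hT : D (hT K n) = drho_basis ord_max.
Proof.
rewrite drhoE (bigD1 ord_max) //= big1 ?addr0 => [|k].
  by rewrite /coords unlift_none /= scale1r.
case: (unliftP ord_max k) => [j ->|->]; last by rewrite eqxx.
by rewrite /coords liftK /= mxE scale0r.
Qed.

Definition rho_line g (i l : 'I_N) : {poly K} := mpoly_line (P i l) (coords g).

Lemma rho_hscale s g : rho (hscale s g) = polymx (rho_line g) s.
Proof.
apply/matrixP => i l; rewrite mxE rhoE /rho_line horner_mpoly_line.
by apply: meval_eq => k; rewrite coords_hscale.
Qed.

Lemma coefmx1_rho_line g : coefmx (rho_line g) 1 = D g.
Proof. by apply/matrixP => i l; rewrite !mxE /rho_line coef1_mpoly_line. Qed.

Definition deg_rho g : nat := \max_(il : 'I_N * 'I_N) size (rho_line g il.1 il.2).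

Lemma size_rho_line g i l : (size (rho_line g i l) <= deg_rho g)%N.
Proof.
exact: (@leq_bigmax _ (fun il : 'I_N * 'I_N => size (rho_line g il.1 il.2)) (i, l)).
Qed.

Lemma polymxD_rho_line g s s' :
  polymx (rho_line g) s *m polymx (rho_line g) s' = polymx (rho_line g) (s + s').
Proof. by rewrite -!rho_hscale -rhoM hmul_hscale. Qed.

Lemma polymx0_rho_line g : polymx (rho_line g) 0 = 1%:M.
Proof. by rewrite -rho_hscale hscale0 rho_unit. Qed.

Lemma drho_nilpotent g J : (deg_rho g <= J)%N -> D g ^+ J = 0.
Proof.
move=> degJ; rewrite -coefmx1_rho_line.
apply: (coefmx1_nilpotent (polymxD_rho_line g) (polymx0_rho_line g)) => i l.
exact: leq_trans (size_rho_line g i l) degJ.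
Qed.

Lemma rho_hscale_expmx g J s : (deg_rho g <= J)%N -> rho (hscale s g) = expmx (D g) J s.
Proof.
move=> degJ; rewrite rho_hscale -coefmx1_rho_line.
apply: (polymx_expmx (polymxD_rho_line g) (polymx0_rho_line g)) => i l.
exact: leq_trans (size_rho_line g i l) degJ.
Qed.

Lemma rho_expmx g J : (deg_rho g <= J)%N -> rho g = expmx (D g) J 1.
Proof. by move=> degJ; rewrite -{1}[g]hscale1 (rho_hscale_expmx 1 degJ). Qed.

(* Both sides are polynomials in [s]; compare their coefficients of degree 1. *)
Lemma drho_identity g a b (A1 A2 : 'M[K]_(a, N)) (B1 B2 : 'M[K]_(N, b)) :
  (forall s, A1 *m rho (hscale s g) *m B1 = A2 *m rho (hscale s g) *m B2) ->
  A1 *m D g *m B1 = A2 *m D g *m B2.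
Proof.
move=> AB; set J := (deg_rho g).+2.
have degJ : (deg_rho g <= J)%N by rewrite /J leqW.
pose e j := (j`!%:R)^-1 *: (A1 *m D g ^+ j *m B1 - A2 *m D g ^+ j *m B2).
have sum_e0 (k : nat) : \sum_(j < J) k%:R ^+ j *: e j = 0.
  have := AB k%:R; rewrite !(rho_hscale_expmx k%:R degJ) !mulmx_expmx => ABk.
  by rewrite /e; under eq_bigr do rewrite !scalerBr; rewrite sumrB ABk subrr.
have := sum_nat_powers_mx_eq0 sum_e0 (isT : (1 < J)%N).
rewrite /e expr1 (_ : 1`!%:R = 1 :> K) ?invr1 ?scale1r //.
by move/eqP; rewrite subr_eq0 => /eqP.
Qed.

Lemma rho_expr g k : rho g ^+ k = rho (hscale k%:R g).
Proof.
elim: k => [|k IH]; first by rewrite expr0 hscale0 rho_unit.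
by rewrite exprS IH -mulmxE -{1}(hscale1 g) -rhoM hmul_hscale // -mulrS.
Qed.

Lemma rho_hinv g : rho (hinv g) *m rho g = 1%:M.
Proof. by rewrite -rhoM hmul_hinv. Qed.

Section Boundary.
Variables (phi : 'rV[K]_N) (oh : 'cV[K]_N).
Hypothesis phi_neq0 : phi != 0.
Hypothesis oh_neq0 : oh != 0.
Hypothesis orbitE : forall x : 'cV[K]_N, x != 0 ->
  (Hstr_orbit rho oh x <-> phi *m x != 0).
Hypothesis hT_fixes_boundary : forall x : 'cV[K]_N, x != 0 -> phi *m x = 0 ->
  exists c : K, rho (hT K n) *m x = c *: x.

Definition phi_at (x : 'cV[K]_N) : K := (phi *m x) 0 0.

Lemma phi_atE x : phi *m x = (phi_at x)%:M.
Proof. exact: mx11_scalar. Qed.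

Lemma phi_at_neq0 x : (phi *m x != 0) = (phi_at x != 0).
Proof.
rewrite phi_atE; apply/idP/idP; apply: contraNN => /eqP x0.
  by rewrite x0 raddf0.
by have := congr1 (fun A : 'M[K]_1 => A 0 0) x0; rewrite !mxE eqxx mulr1n => ->.
Qed.

Lemma phi_atD x y : phi_at (x + y) = phi_at x + phi_at y.
Proof. by rewrite /phi_at mulmxDr mxE. Qed.

Lemma phi_atZ c x : phi_at (c *: x) = c * phi_at x.
Proof. by rewrite /phi_at -scalemxAr mxE. Qed.

Lemma phi_at0 : phi_at 0 = 0.
Proof. by rewrite /phi_at mulmx0 mxE. Qed.

Lemma orbit_phi_at x : phi_at x != 0 -> Hstr_orbit rho oh x.
Proof.
move=> x_out; have x_neq0 : x != 0 by apply: contraNneq x_out => ->; rewrite phi_at0.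
by apply/(orbitE x_neq0); rewrite phi_at_neq0.
Qed.

Lemma phi_at_oh : phi_at oh != 0.
Proof.
rewrite -phi_at_neq0; apply/(orbitE oh_neq0); exists (hunit K n), 1.
by rewrite oner_neq0 rho_unit mul1mx scale1r.
Qed.

Lemma phi_at_rho_ker g x : phi_at x = 0 -> phi_at (rho g *m x) = 0.
Proof.
move=> x_in; apply/eqP/negPn/negP => gx_out.
have x_neq0 : x != 0 by apply: contraNneq gx_out => ->; rewrite mulmx0 phi_at0.
have [h [c [c_neq0 gx]]] := orbit_phi_at gx_out.
have /(orbitE x_neq0) : Hstr_orbit rho oh x.
  exists (hmul Om (hinv g) h), c; split => //.
  by rewrite rhoM -mulmxA scalemxAr -gx mulmxA rho_hinv mul1mx.
by rewrite phi_at_neq0 x_in eqxx.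
Qed.

Definition u0 : 'cV[K]_N := (phi_at oh)^-1 *: oh.

Lemma phi_at_u0 : phi_at u0 = 1.
Proof. by rewrite phi_atZ mulVf // phi_at_oh. Qed.

Lemma phi_at_ker_proj x : phi_at (x - phi_at x *: u0) = 0.
Proof. by rewrite phi_atD -scaleN1r 2!phi_atZ phi_at_u0 mulr1 mulN1r subrr. Qed.

Lemma factor_through_phi m (A : 'M[K]_(m, N)) :
  (forall x, phi_at x = 0 -> A *m x = 0) -> A = (A *m u0) *m phi.
Proof.
move=> A_ker; apply: eq_mx_on_cV => x.
rewrite -{1}(subrK (phi_at x *: u0) x) mulmxDr (A_ker _ (phi_at_ker_proj x)) add0r.
by rewrite -[RHS]mulmxA phi_atE mul_mx_scalar scalemxAr.
Qed.

Lemma phi_drho g : phi *m D g = 0.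
Proof.
have ker_phiD x : phi_at x = 0 -> phi *m D g *m x = 0.
  move=> x_in; have := @drho_identity g 1 1 phi 0 x x; rewrite !mul0mx; apply=> s.
  by rewrite -mulmxA phi_atE phi_at_rho_ker // raddf0 !mul0mx.
have phiD_eigen : phi *m D g = phi_at (D g *m u0) *: phi.
  by rewrite {1}(factor_through_phi ker_phiD) -[phi *m D g *m u0]mulmxA phi_atE mul_scalar_mx.
have := nilpotent_eigenvalue0 (drho_nilpotent (leqnn _)) phi_neq0 phiD_eigen.
by rewrite phiD_eigen => ->; rewrite scale0r.
Qed.

Lemma phi_rho g : phi *m rho g = phi.
Proof. by rewrite (rho_expmx (leqnSn _)) mulmx_expmx_ker ?phi_drho. Qed.

Lemma phi_at_rho g x : phi_at (rho g *m x) = phi_at x.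
Proof. by rewrite /phi_at mulmxA phi_rho. Qed.

Local Notation Dt := (D (hT K n)).
Definition mt : 'cV[K]_N := Dt *m u0.

Lemma Dt_ker x : phi_at x = 0 -> Dt *m x = 0.
Proof.
move=> x_in; have [->|x_neq0] := eqVneq x 0; first by rewrite mulmx0.
have [c Tx] : exists c, rho (hT K n) *m x = c *: x.
  by apply: hT_fixes_boundary x_neq0 _; rewrite phi_atE x_in raddf0.
apply: (@expmx_eigenvector _ _ Dt (deg_rho (hT K n)) x c).
  exact: drho_nilpotent (leqW (leqnSn _)).
by rewrite -(rho_expmx (leqW (leqnSn _))).
Qed.

Lemma Dt_rank1 : Dt = mt *m phi.
Proof. exact: factor_through_phi Dt_ker. Qed.

Lemma Dt_apply x : Dt *m x = phi_at x *: mt.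
Proof. by rewrite Dt_rank1 -mulmxA phi_atE mul_mx_scalar. Qed.

Lemma Dt_sqr0 : Dt *m Dt = 0.
Proof. by rewrite {1}Dt_rank1 -mulmxA phi_drho mulmx0. Qed.

Lemma rho_center s : rho (0, s) = 1%:M + s *: Dt.
Proof.
by rewrite -hscale_hT (rho_hscale_expmx s (leqW (leqnSn _))) expmx_sqr0 // Dt_sqr0.
Qed.

Lemma rho_Dt g : rho g *m Dt = Dt *m rho g.
Proof.
have := congr1 rho (hmul_center Om g 1); rewrite !rhoM rho_center mulmxDr mulmxDl.
by rewrite mulmx1 mul1mx -!scalemxAr -!scalemxAl !scale1r => /addrI.
Qed.

Lemma drho_Dt g : D g *m Dt = Dt *m D g.
Proof.
have := @drho_identity g N N 1%:M Dt Dt 1%:M; rewrite !mul1mx !mulmx1; apply=> s.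
by rewrite !mul1mx !mulmx1 rho_Dt.
Qed.

Lemma rho_mt g : rho g *m mt = phi_at (rho g *m u0) *: mt.
Proof. by rewrite {1}/mt mulmxA rho_Dt -mulmxA Dt_apply. Qed.

Lemma drho_mt g : D g *m mt = phi_at (D g *m u0) *: mt.
Proof. by rewrite {1}/mt mulmxA drho_Dt -mulmxA Dt_apply. Qed.

Lemma center_orbit_submx y : center_orbit rho oh y -> (y^T <= col_mx oh^T mt^T)%MS.
Proof.
have /andP [oh_sub mt_sub] : (oh^T <= col_mx oh^T mt^T)%MS && (mt^T <= col_mx oh^T mt^T)%MS.
  by rewrite -col_mx_sub submx_refl.
move=> [s [c [_ ->]]]; rewrite rho_center mulmxDl mul1mx -scalemxAl Dt_apply.
rewrite !linearZ /= linearD /= !linearZ /=.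
by rewrite scalemx_sub // addmx_sub // !scalemx_sub.
Qed.

Lemma center_orbit_comb a b : a != 0 -> center_orbit rho oh (a *: oh + b *: mt).
Proof.
move=> a_neq0; exists (b / (a * phi_at oh)), a; split => //.
rewrite rho_center mulmxDl mul1mx -scalemxAl Dt_apply scalerA scalerDr scalerA.
congr (_ + _); congr (_ *: _); have := phi_at_oh; move: (phi_at oh) => q q_neq0.
by field; rewrite q_neq0 a_neq0.
Qed.

Section Closure.
Variable vh : 'cV[K]_N.
Hypothesis vh_neq0 : vh != 0.
Hypothesis vh_closure : in_Pclosure (center_orbit rho oh) vh.
Hypothesis vh_boundary : ~ center_orbit rho oh vh.

Lemma vh_mt : exists2 b, b != 0 & vh = b *: mt.
Proof.
have /submxP [r vhE] := in_Pclosure_submx center_orbit_submx vh_closure.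
set a := r 0 (lshift 1 0); set b := r 0 (rshift 1 0).
have vh_comb : vh = a *: oh + b *: mt.
  apply: trmx_inj; rewrite vhE linearD /= !linearZ /=.
  rewrite -[r]hsubmxK mul_row_col [lsubmx r]mx11_scalar [rsubmx r]mx11_scalar.
  by rewrite !mul_scalar_mx !mxE.
have a0 : a = 0.
  have [//|a_neq0] := eqVneq a 0.
  by case: vh_boundary; rewrite vh_comb; apply: center_orbit_comb.
rewrite a0 scale0r add0r in vh_comb.
by exists b => //; apply: contraNneq vh_neq0 => b0; rewrite vh_comb b0 scale0r.
Qed.

Lemma mt_line_vh y c : y = c *: mt -> exists c', y = c' *: vh.
Proof. by have [b b_neq0 ->] := vh_mt; move=> ->; exists (c / b); rewrite scalerA divfK. Qed.

(* [theta0 Y]: the endomorphism of [V / K vh] induced by [Y] vanishes. *)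
Definition theta0 (Y : 'M[K]_N) := forall x : 'cV[K]_N, exists c : K, Y *m x = c *: vh.
Definition stab_vh (a : 'M[K]_N) := exists d : K, a *m vh = d *: vh.

Lemma theta0D Y1 Y2 : theta0 Y1 -> theta0 Y2 -> theta0 (Y1 + Y2).
Proof.
move=> th1 th2 x; have [c1 e1] := th1 x; have [c2 e2] := th2 x.
by exists (c1 + c2); rewrite mulmxDl e1 e2 scalerDl.
Qed.

Lemma theta0Z c Y : theta0 Y -> theta0 (c *: Y).
Proof.
by move=> th x; have [c1 e1] := th x; exists (c * c1); rewrite -scalemxAl e1 scalerA.
Qed.

Lemma theta00 : theta0 0.
Proof. by move=> x; exists 0; rewrite mul0mx scale0r. Qed.

Lemma theta0_mull a Y : stab_vh a -> theta0 Y -> theta0 (a *m Y).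
Proof.
move=> [d ad] th x; have [c e] := th x.
by exists (c * d); rewrite -mulmxA e -scalemxAr ad scalerA mulrC.
Qed.

Lemma theta0_mulr a Y : theta0 Y -> theta0 (Y *m a).
Proof. by move=> th x; rewrite -mulmxA; exact: th. Qed.

Lemma theta0_commutator a b a' b' : stab_vh a -> theta0 (a - a') -> theta0 (b - b') ->
  theta0 (a *m b - a' *m b').
Proof.
move=> stab_a th_a th_b.
have -> : a *m b - a' *m b' = a *m (b - b') + (a - a') *m b'.
  by rewrite mulmxBr mulmxBl addrA subrK.
by apply: theta0D; [exact: theta0_mull | exact: theta0_mulr].
Qed.

Lemma stab_vh0 : stab_vh 0.
Proof. by exists 0; rewrite mul0mx scale0r. Qed.

Lemma stab_vhD a b : stab_vh a -> stab_vh b -> stab_vh (a + b).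
Proof. by move=> [d1 e1] [d2 e2]; exists (d1 + d2); rewrite mulmxDl e1 e2 scalerDl. Qed.

Lemma stab_vhZ c a : stab_vh a -> stab_vh (c *: a).
Proof. by move=> [d e]; exists (c * d); rewrite -scalemxAl e scalerA. Qed.

Lemma stab_vhM a b : stab_vh a -> stab_vh b -> stab_vh (a *m b).
Proof.
by move=> [d1 e1] [d2 e2]; exists (d2 * d1); rewrite -mulmxA e2 -scalemxAr e1 scalerA.
Qed.

Lemma stab_vh_rho g : stab_vh (rho g).
Proof.
rewrite /stab_vh; have [b _ ->] := vh_mt; exists (phi_at (rho g *m u0)).
by rewrite -scalemxAr rho_mt !scalerA mulrC.
Qed.

Lemma stab_vh_drho g : stab_vh (D g).
Proof.
rewrite /stab_vh; have [b _ ->] := vh_mt; exists (phi_at (D g *m u0)).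
by rewrite -scalemxAr drho_mt !scalerA mulrC.
Qed.

Lemma theta0_Dt : theta0 Dt.
Proof. by move=> x; rewrite Dt_apply; exact: mt_line_vh. Qed.

(* The commutator of [g] and [h] is central, so it acts as [1 + s Dt]. *)
Lemma theta0_rho_comm h g : theta0 (rho h *m rho g - rho g *m rho h).
Proof.
rewrite -!rhoM (hmul_commutator Om h g) rhoM rho_center mulmxDr mulmx1 addrC addKr.
by rewrite -scalemxAr; apply/theta0Z/theta0_mull; [exact: stab_vh_rho | exact: theta0_Dt].
Qed.

Definition in_A := alg_gen true (fun b => exists g (c : K), c != 0 /\ b = c *: rho g).

Lemma in_A_stab_comm a :
  in_A a -> stab_vh a /\ forall g, theta0 (a *m rho g - rho g *m a).
Proof.
have comm_scale c b g : theta0 (b *m rho g - rho g *m b) ->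
    theta0 (c *: b *m rho g - rho g *m (c *: b)).
  by rewrite -scalemxAl -scalemxAr -scalerBr; apply: theta0Z.
elim => {a} [a [h [c [_ ->]]]|_||a b _ [sa ca] _ [sb cb]|c a _ [sa ca]
            |a b _ [sa ca] _ [sb cb]].
- by split=> [|g]; [apply/stab_vhZ/stab_vh_rho | apply/comm_scale/theta0_rho_comm].
- split=> [|g]; first by exists 1; rewrite mul1mx scale1r.
  by rewrite mul1mx mulmx1 subrr; exact: theta00.
- by split=> [|g]; [exact: stab_vh0 | rewrite mul0mx mulmx0 subrr; exact: theta00].
- split=> [|g]; first exact: stab_vhD.
  by rewrite mulmxDl mulmxDr opprD addrACA; exact: theta0D.
- by split=> [|g]; [exact: stab_vhZ | exact: comm_scale].
- split=> [|g]; first exact: stab_vhM.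
  have -> : a *m b *m rho g - rho g *m (a *m b) =
            a *m (b *m rho g - rho g *m b) + (a *m rho g - rho g *m a) *m b.
    by rewrite mulmxBr mulmxBl !mulmxA addrA subrK.
  by apply: theta0D; [exact: theta0_mull | exact: theta0_mulr].
Qed.

(* Every [x] outside [ker phi] is [c rho g oh], and [a] commutes with [rho g]
   modulo [theta0]; [ker phi] is then reached by translating by [oh]. *)
Lemma theta0_ker_ev a : in_A a -> a *m oh = 0 -> theta0 a.
Proof.
move=> /in_A_stab_comm [_ a_comm] a_oh.
have a_out x : phi_at x != 0 -> exists c, a *m x = c *: vh.
  move=> /orbit_phi_at [g [c [_ ->]]]; have [c' e] := a_comm g oh.
  exists (c * c'); rewrite -scalemxAr mulmxA -scalerA -e.
  by rewrite mulmxBl -(mulmxA (rho g)) a_oh mulmx0 subr0.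
move=> x; have [x_in|] := eqVneq (phi_at x) 0; last exact: a_out.
have [|c e] := a_out (x + oh); first by rewrite phi_atD x_in add0r phi_at_oh.
by exists c; rewrite -e mulmxDr a_oh addr0.
Qed.

Definition in_h (X : 'M[K]_N) := exists g, X = D g.
Definition in_w (X : 'M[K]_N) := exists w, X = D (w, 0).

Lemma theta_m_in_w a : alg_gen false in_h a ->
  stab_vh a /\ exists b, alg_gen false in_w b /\ qeq vh a b.
Proof.
rewrite /qeq; elim => {a} [a [g ->]|//||a b _ [sa [a' [ha' qa]]] _ [sb [b' [hb' qb]]]
  |c a _ [sa [a' [ha' qa]]]|a b _ [sa [a' [ha' qa]]] _ [sb [b' [hb' qb]]]].
- split; first exact: stab_vh_drho.
  exists (D (g.1, 0)); split; first by apply: ag_in; exists g.1.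
  by rewrite {1}drho_split addrC addKr; apply/theta0Z/theta0_Dt.
- split; first exact: stab_vh0.
  by exists 0; split; [exact: ag_zero | rewrite subrr; exact: theta00].
- split; first exact: stab_vhD.
  exists (a' + b'); split; first exact: ag_add.
  by rewrite opprD addrACA; exact: theta0D.
- split; first exact: stab_vhZ.
  by exists (c *: a'); split; [exact: ag_scale | rewrite -scalerBr; exact: theta0Z].
- split; first exact: stab_vhM.
  by exists (a' *m b'); split; [exact: ag_mul | exact: theta0_commutator].
Qed.

Definition hv_rows : 'M[K]_(n.*2.+1 + N, N * N) :=
  col_mx (\matrix_(k < n.*2.+1) mxvec (drho_basis k))
         (\matrix_(l < N) mxvec (vh *m delta_mx 0 l)).

Section FormsVanishingOnRows.
Variable lam : 'cV[K]_(N * N).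
Hypothesis lam_rows : hv_rows *m lam = 0.

Lemma mxform_rows :
  (forall k, mxform lam (drho_basis k) = 0) /\
  (forall l, mxform lam (vh *m delta_mx 0 l) = 0).
Proof.
move: lam_rows; rewrite /hv_rows mul_col_mx => /eqP; rewrite col_mx_eq0.
move=> /andP [/eqP basis0 /eqP vh0]; split=> [k|l].
  by have := congr1 (row k) basis0; rewrite row_mul rowK row0 => e; rewrite /mxform e mxE.
by have := congr1 (row l) vh0; rewrite row_mul rowK row0 => e; rewrite /mxform e mxE.
Qed.

Lemma mxform_drho g : mxform lam (D g) = 0.
Proof.
rewrite drhoE mxform_sum big1 // => k _.
by rewrite mxformZ mxform_rows.1 mulr0.
Qed.

Lemma mxform_theta0 Y : theta0 Y -> mxform lam Y = 0.
Proof.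
move=> thY; have -> : Y = \sum_(l < N) col l Y *m delta_mx 0 l.
  apply/matrixP => i j; rewrite summxE (bigD1 j) //= big1 ?addr0 => [|l nlj].
    by rewrite !mxE big_ord1 !mxE !eqxx mulr1.
  by rewrite !mxE big_ord1 !mxE [j == l]eq_sym (negbTE nlj) andbF mulr0.
rewrite mxform_sum big1 // => l _; have [c e] := thY (delta_mx l 0).
by rewrite colE e -scalemxAl mxformZ mxform_rows.2 mulr0.
Qed.

Lemma mxform_rho_expr g k :
  mxform lam (rho g ^+ k) =
  (\poly_(j < (deg_rho g).+1) ((j`!%:R)^-1 * mxform lam (D g ^+ j))).[k%:R].
Proof.
rewrite rho_expr (rho_hscale_expmx _ (leqnSn _)) /expmx mxform_sum horner_poly.
by apply: eq_bigr => j _; rewrite !mxformZ mulrC.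
Qed.

End FormsVanishingOnRows.

Lemma theta0_drho_of_mxform b :
  (forall lam, hv_rows *m lam = 0 -> mxform lam b = 0) -> exists g, theta0 (b - D g).
Proof.
move=> b_forms.
have /submxP [r br] : (mxvec b <= hv_rows)%MS.
  rewrite submxE; apply/eqP/matrixP => i c; rewrite (ord1 i) [RHS]mxE.
  have := b_forms (cokermx hv_rows *m delta_mx c 0).
  rewrite mulmxA mulmx_coker mul0mx => /(_ erefl).
  by rewrite /mxform mulmxA -colE mxE.
rewrite -[r]hsubmxK mul_row_col in br.
set r1 := lsubmx r in br; set r2 := rsubmx r in br.
exists (hgrp_of_coords r1).
have r1_drho :
    r1 *m (\matrix_(k < n.*2.+1) mxvec (drho_basis k)) = mxvec (D (hgrp_of_coords r1)).
  rewrite mulmx_sum_row drhoE linear_sum /=; apply: eq_bigr => k _.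
  by rewrite rowK coords_hgrp_of_coords linearZ.
have r2_vh : r2 *m (\matrix_(l < N) mxvec (vh *m delta_mx 0 l)) = mxvec (vh *m r2).
  rewrite mulmx_sum_row [in RHS](row_sum_delta r2) mulmx_sumr linear_sum /=.
  by apply: eq_bigr => l _; rewrite rowK -scalemxAr linearZ.
have -> : b = D (hgrp_of_coords r1) + vh *m r2.
  by apply: (can_inj mxvecK); rewrite br r1_drho r2_vh linearD.
move=> x; rewrite addrAC subrr add0r -mulmxA.
by rewrite [r2 *m x]mx11_scalar mul_mx_scalar; eexists.
Qed.

Lemma orbit_translate z e : phi_at z = 0 -> exists g, oh + e *: z = rho g *m oh.
Proof.
move=> z_in; have oh_ez : phi_at (oh + e *: z) = phi_at oh.
  by rewrite phi_atD phi_atZ z_in mulr0 addr0.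
have [|g [c [_ gE]]] := @orbit_phi_at (oh + e *: z); first by rewrite oh_ez phi_at_oh.
have c1 : c = 1.
  move: (congr1 phi_at gE); rewrite phi_atZ phi_at_rho oh_ez.
  by rewrite -{1}(mul1r (phi_at oh)) => /(mulIf phi_at_oh).
by exists g; rewrite gE c1 scale1r.
Qed.

Lemma theta0_exprB a b k : stab_vh a -> theta0 (a - b) -> theta0 (a ^+ k - b ^+ k).
Proof.
move=> stab_a th; elim: k => [|k IH]; first by rewrite !expr0 subrr; exact: theta00.
by rewrite !exprS -!mulmxE; exact: theta0_commutator.
Qed.

Lemma in_A_rho g : in_A (rho g).
Proof. by apply: ag_in; exists g, 1; rewrite oner_neq0 scale1r. Qed.

Lemma in_AB a b : in_A a -> in_A b -> in_A (a - b).
Proof. by move=> ha hb; rewrite -scaleN1r; apply: ag_add ha (ag_scale _ hb). Qed.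

(* [oh + e b oh] lies in the orbit, so [theta0 (rho g - (1 + e b))]; comparing
   [mxform lam] of the [k]-th powers as polynomials in [k] and taking the
   coefficient of degree 1 kills [mxform lam (D g)]. *)
Lemma mxform_binomial_coef1 lam b J (e : K) g :
  hv_rows *m lam = 0 -> in_A b -> b ^+ J = 0 -> oh + e *: (b *m oh) = rho g *m oh ->
  \sum_(i < J) e ^+ i * mxform lam (b ^+ i) * (binpoly K i)`_1 = 0.
Proof.
move=> lam_rows b_in_A bJ0 gE; set Q := 1%:M + e *: b.
have th : theta0 (rho g - Q).
  apply: theta0_ker_ev.
    by apply/in_AB/ag_add/ag_scale; [exact: in_A_rho | exact: ag_unit |].
  by rewrite mulmxBl mulmxDl mul1mx -scalemxAl gE subrr.
pose p1 := \poly_(j < (deg_rho g).+1) ((j`!%:R)^-1 * mxform lam (D g ^+ j)).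
pose p2 := \sum_(i < J) (e ^+ i * mxform lam (b ^+ i)) *: binpoly K i.
have p12 : p1 = p2.
  apply: poly_nat_inj => k; rewrite -mxform_rho_expr // -mxform_binomial //.
  apply/eqP; rewrite -subr_eq0 -mxformB; apply/eqP/mxform_theta0 => //.
  exact: theta0_exprB (stab_vh_rho g) th.
move: (congr1 (fun q : {poly K} => q`_1) p12).
rewrite coef_poly expr1 mxform_drho // mulr0 if_same coef_sum => p2_coef1.
rewrite [RHS]p2_coef1.
by apply: eq_bigr => i _; rewrite [RHS]coefZ.
Qed.

Lemma ker_phi_tangent z : phi_at z = 0 -> exists g (c : K), z = D g *m oh + c *: vh.
Proof.
move=> z_in; have [g1 g1E] := orbit_translate 1 z_in.
set b := rho g1 - 1%:M; set J := (deg_rho g1).+2.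
have b_oh : b *m oh = z by rewrite /b mulmxBl mul1mx -g1E scale1r addrC addKr.
have bJ0 : b ^+ J = 0.
  rewrite /b (@rho_expmx g1 J.+1) ?expmx1_sub1_nilpotent //.
    exact: drho_nilpotent (leqW (leqnSn _)).
  exact: leqW (leqW (leqnSn _)).
have b_in_A : in_A b := in_AB (in_A_rho g1) (ag_unit _ isT).
have [g th] : exists g, theta0 (b - D g).
  apply: theta0_drho_of_mxform => lam lam_rows.
  have coef0 (k : nat) :
      \sum_(i < J) (mxform lam (b ^+ i) * (binpoly K i)`_1) * k%:R ^+ i = 0.
    have [gk gkE] := orbit_translate k%:R z_in.
    rewrite -[RHS](mxform_binomial_coef1 lam_rows b_in_A bJ0 (e := k%:R) (g := gk)).
      by apply: eq_bigr => i _; rewrite mulrC mulrA.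
    by rewrite b_oh.
  have := @sum_nat_powers_eq0 _ J (fun i => mxform lam (b ^+ i) * (binpoly K i)`_1) coef0 1.
  by rewrite binpoly1_coef1 mulr1 expr1; apply.
have [c e] := th oh; exists g, c.
by rewrite -e mulmxBl addrC subrK b_oh.
Qed.

Definition tangent_rows : 'M[K]_(n.*2.+1, N) := \matrix_(k < n.*2.+1)
  (if unlift ord_max k is Some _ then (drho_basis k *m oh)^T else vh^T).

Lemma ker_phi_sub_tangent_rows : (kermx phi^T <= tangent_rows)%MS.
Proof.
have vh_sub : (vh^T <= tangent_rows)%MS.
  by have := row_sub ord_max tangent_rows; rewrite rowK unlift_none.
have basis_sub k : ((drho_basis k *m oh)^T <= tangent_rows)%MS.
  case: (unliftP ord_max k) => [j ->|->].
    by have := row_sub (lift ord_max j) tangent_rows; rewrite rowK liftK.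
  rewrite -drho_hT Dt_apply; have [c' ->] := @mt_line_vh (phi_at oh *: mt) _ erefl.
  by rewrite linearZ /= scalemx_sub.
apply/row_subP => i; rewrite -[row i _]trmxK.
have [|g [c ->]] := @ker_phi_tangent (row i (kermx phi^T))^T.
  have : row i (kermx phi^T) *m phi^T = 0 by rewrite -row_mul mulmx_ker row0.
  by move=> ker0; rewrite /phi_at -{1}[phi]trmxK -trmx_mul ker0 trmx0 mxE.
rewrite linearD /= linearZ /= drhoE mulmx_suml linear_sum /=.
apply: addmx_sub; last exact: scalemx_sub.
by apply: summx_sub => k _; rewrite -scalemxAl linearZ /= scalemx_sub.
Qed.

Lemma tangent_rows_free : row_free tangent_rows.
Proof.
rewrite /row_free eqn_leq rank_leq_row /=.
have := mxrankS ker_phi_sub_tangent_rows.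
by rewrite mxrank_ker mxrank_tr rank_rV phi_neq0 subn1.
Qed.

Lemma theta_inj_w w : qeq vh (D (w, 0)) 0 -> D (w, 0) = 0.
Proof.
move=> /(_ oh) [beta]; rewrite subr0 => w_oh.
pose r : 'rV[K]_(n.*2.+1) :=
  \row_k (if unlift ord_max k is Some _ then coords (w, 0) k else - beta).
suff r0 : r = 0.
  suff -> : w = 0 by exact: drho0.
  apply/rowP => j; move/rowP/(_ (lift ord_max j)): r0.
  by rewrite /r !mxE liftK /coords liftK.
apply: (row_free_inj tangent_rows_free); rewrite mul0mx mulmx_sum_row.
rewrite (bigD1 ord_max) //= rowK !mxE unlift_none.
have -> : \sum_(k < n.*2.+1 | k != ord_max) r 0 k *: row k tangent_rows = beta *: vh^T.
  move: (congr1 trmx w_oh); rewrite drhoE mulmx_suml linear_sum linearZ /= => <-.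
  rewrite [RHS](bigD1 ord_max) //= {1}/coords unlift_none /= scale0r mul0mx trmx0 add0r.
  apply: eq_bigr => k; case: (unliftP ord_max k) => [j ->|->]; last by rewrite eqxx.
  by move=> _; rewrite !mxE rowK liftK -scalemxAl linearZ.
by rewrite scaleNr addNr.
Qed.

Lemma theta_claims :
  [/\ qeq vh Dt 0,
      forall w, qeq vh (D (w, 0)) 0 -> D (w, 0) = 0,
      forall a, alg_gen false in_h a -> exists b, alg_gen false in_w b /\ qeq vh a b
    & forall a, in_A a -> a *m oh = 0 -> qeq vh a 0].
Proof.
split=> [||a /theta_m_in_w [] //|a a_A a_oh].
- by rewrite /qeq subr0; exact: theta0_Dt.
- exact: theta_inj_w.
- by rewrite /qeq subr0; exact: theta0_ker_ev.
Qed.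

End Closure.

End Boundary.

End Representation.

Theorem lemma3p1 (R : realType) (n : nat)
  (Om : 'M[R[i]]_(n.*2))
  (rho : Hgrp R[i] n -> 'M[R[i]]_(n.*2.+2))
  (P : 'I_(n.*2.+2) -> 'I_(n.*2.+2) -> {mpoly R[i][n.*2.+1]})
  (phi : 'rV[R[i]]_(n.*2.+2)) (oh vh : 'cV[R[i]]_(n.*2.+2)) :
  (0 < n)%N ->
  (* (W, omega) : omega skew-symmetric and non-degenerate *)
  Om^T = - Om -> Om \in unitmx ->
  (* rho : H_{2n+1} -> GL(V) is an algebraic (polynomial) group homomorphism *)
  rho (hunit R[i] n) = 1%:M ->
  (forall g h, rho (hmul Om g h) = rho g *m rho h) ->
  (forall g i j, rho g i j = (P i j).@[coords g]) ->
  (* the induced action on P(V) is effective *)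
  (forall g (c : R[i]), rho g = c%:M -> g = hunit R[i] n) ->
  (* o = [oh] lies in the open orbit, whose complement is the hyperplane
     P(V'), V' = ker phi *)
  phi != 0 -> oh != 0 ->
  (forall x : 'cV[R[i]]_(n.*2.+2), x != 0 -> (Hstr_orbit rho oh x <-> phi *m x != 0)) ->
  (* T fixes every point of the boundary hyperplane *)
  (forall x : 'cV[R[i]]_(n.*2.+2), x != 0 -> phi *m x = 0 ->
     exists c : R[i], rho (hT R[i] n) *m x = c *: x) ->
  (* v = [vh] lies in closure(I.o) \ I.o *)
  vh != 0 -> in_Pclosure (center_orbit rho oh) vh ->
  ~ center_orbit rho oh vh ->
  let t := @drho _ n _ P (hT R[i] n) in
  let in_h := fun X => exists g, X = @drho _ n _ P g in
  let in_w := fun X => exists w, X = @drho _ n _ P (w, 0) in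
  let in_m := alg_gen false in_h in
  let in_A := alg_gen true (fun b => exists g (c : R[i]), c != 0 /\ b = c *: rho g) in
  [/\ (* theta(t) = 0 *)
      qeq vh t 0,
      (* theta injective on w *)
      (forall X, in_w X -> qeq vh X 0 -> X = 0),
      (* theta(w) generates m_B = theta(m) as an associative algebra *)
      (forall a, in_m a -> exists b, alg_gen false in_w b /\ qeq vh a b) /\
      (forall b, alg_gen false in_w b -> exists a, in_m a /\ qeq vh a b)
    & (* theta(ker ev) = 0 *)
      (forall a, in_A a -> a *m oh = 0 -> qeq vh a 0)].

Proof.
move=> _ Om_skew _ rho_unit rhoM rhoE _ phi_neq0 oh_neq0 orbitE hT_fix vh_neq0 vh_cl vh_bd.
have [t0 inj_w m_w ker_ev] :=
  theta_claims Om_skew rho_unit rhoM rhoE phi_neq0 oh_neq0 orbitE hT_fix vh_neq0 vh_cl vh_bd.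
move=> t in_h in_w in_m in_A; split=> //.
- by move=> X [w ->]; exact: inj_w.
- split=> // b b_w; exists b; split.
    by apply: alg_gen_sub b_w => X [w ->]; exists (w, 0).
  by move=> x; exists 0; rewrite subrr mul0mx scale0r.
Qed.
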